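(* For $T$ large enough let $Q_T$ denote the unique $T$-periodic solution of the pendulum equation $\ddot q=\sin q$ with small positive energy satisfying $Q_T(0)=-\pi$, $Q_T(T)=\pi$. There exists $T_0>0$ such that for every $T\ge T_0$ and every continuous $f:[-1,T+1]\to\mathbf R$ there exists a unique solution $h$ of $$-\ddot h+\cos(Q_T(t))\,h=f,\qquad h(0)=h(T)=0,$$ on $[-1,T+1]$, and the Green operator $\mathcal G:C^0([-1,T+1])\to C^2([-1,T+1])$, $\mathcal G(f)=h$, satisfies $$\max_{t\in[-1,T+1]}\big(|h(t)|+|\dot h(t)|\big)\le C\max_{t\in[-1,T+1]}|f(t)|$$ for a constant $C>0$ independent of $T$. *)

From Stdlib Require Import Reals.
From Coquelicot Require Import Coquelicot.
Open Scope R_scope.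

Definition in_Icc (a b t : R) : Prop := a <= t <= b.

Definition continuous_on_Icc (a b : R) (f : R -> R) : Prop :=
  forall t, in_Icc a b t ->
    filterlim f (within (in_Icc a b) (locally t)) (locally (f t)).

Definition derive_on_Icc (a b : R) (f f' : R -> R) : Prop :=
  forall t, in_Icc a b t ->
    filterlim (fun s => (f s - f t) / (s - t))
      (within (fun s => in_Icc a b s /\ s <> t) (locally t)) (locally (f' t)).

(* Energy of the pendulum q'' = sin q, normalised so that the separatrix
   through the hyperbolic equilibrium q = 0 has energy 0. *)
Definition pend_energy (q v : R) : R := v ^ 2 / 2 + cos q - 1.

(* Q (with velocity Q') is the T-periodic (mod 2 pi) solution of the pendulum
   equation with positive energy and Q(0) = -pi, Q(T) = pi. *)
Definition is_Q_T (T : R) (Q Q' : R -> R) : Prop :=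
  (forall t, is_derive Q t (Q' t)) /\
  (forall t, is_derive Q' t (sin (Q t))) /\
  0 < pend_energy (Q 0) (Q' 0) /\
  (forall t, Q (t + T) = Q t + 2 * PI) /\
  Q 0 = - PI /\ Q T = PI.

Definition green_sol (T : R) (Q f h h' h'' : R -> R) : Prop :=
  derive_on_Icc (-1) (T + 1) h h' /\
  derive_on_Icc (-1) (T + 1) h' h'' /\
  continuous_on_Icc (-1) (T + 1) h'' /\
  (forall t, in_Icc (-1) (T + 1) t -> - h'' t + cos (Q t) * h t = f t) /\
  h 0 = 0 /\ h T = 0.

From Stdlib Require Import Reals Lra Psatz.
From Coquelicot Require Import Coquelicot.
Open Scope R_scope.

(* Along the orbit, w = 1/2 + 2 cos (Q/2) - cos Q / 2 lies in [1, 2] and satisfies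
   -w'' + cos Q w >= 1/4 on [0, T], whatever the (positive) energy. Hence the operator
   -h'' + cos Q h obeys a maximum principle there, and comparing h with 4 M w gives
   |h| <= 8 M when |f| <= M and h(0) = h(T) = 0, uniformly in T. The equation then bounds
   h'', interpolation over unit intervals bounds h', and Gronwall carries these bounds
   across the collars [-1, 0] and [T, T + 1]. Existence is variation of parameters
   with the homogeneous solution Q' (differentiate the pendulum equation) and the second
   solution Q' * int_0^t Q'^-2 of Wronskian 1; uniqueness follows from the constancy of
   Wronskians. *)

(* Stated at type [R] so that it rewrites the [Derive (fun x : R => _)] terms
   produced by [auto_derive]. *)
Lemma Derive_is_derive (f : R -> R) t l : is_derive f t l -> Derive (fun x : R => f x) t = l.
Proof. apply is_derive_unique. Qed.

(* [auto_derive], reading the derivatives of abstract functions off the [is_derive]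
   hypotheses in context. *)
Ltac derive_by_hyps :=
  auto_derive;
  repeat match goal with
  | |- _ /\ _ => split
  | |- True => exact I
  | |- ex_derive _ _ => solve [eexists; eauto]
  | |- _ <> _ => solve [auto]
  end;
  repeat match goal with
  | H : forall s, is_derive ?F s _ |- context [Derive (fun x => ?F x) ?t] =>
      rewrite (Derive_is_derive F t _ (H t))
  | H : is_derive ?F ?t _ |- context [Derive (fun x => ?F x) ?t] =>
      rewrite (Derive_is_derive F t _ H)
  end;
  unfold Rminus, Rdiv.

Lemma MVT_is_derive (f f' : R -> R) a b : a < b -> (forall t, is_derive f t (f' t)) ->
  exists c, a < c < b /\ f b - f a = f' c * (b - a).
Proof.
  intros ab df. destruct (MVT_cor2 f f' a b ab) as [c [E Hc]].
  - intros c _. apply is_derive_Reals, df.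
  - now exists c.
Qed.

Lemma MVT_Rabs_le (f f' : R -> R) a b B : a <= b -> (forall t, is_derive f t (f' t)) ->
  (forall t, a <= t <= b -> Rabs (f' t) <= B) -> Rabs (f b - f a) <= B * (b - a).
Proof.
  intros ab df bound. destruct (Rle_lt_or_eq_dec _ _ ab) as [lt | <-].
  - destruct (MVT_is_derive f f' a b lt df) as [c [Hc ->]].
    rewrite Rabs_mult, (Rabs_right (b - a)) by lra.
    apply Rmult_le_compat_r; [lra | apply bound; lra].
  - replace (f a - f a) with 0 by ring. rewrite Rabs_R0, Rminus_diag, Rmult_0_r. lra.
Qed.

Lemma is_derive_continuity_pt (f : R -> R) t l : is_derive f t l -> continuity_pt f t.
Proof.
  intros df. apply continuity_pt_filterlim, (ex_derive_continuous f). now exists l.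
Qed.

Lemma is_derive0_constant a b (f : R -> R) : (forall t, a < t < b -> is_derive f t 0) ->
  forall x y, a < x < b -> a < y < b -> f x = f y.
Proof.
  intros df x y Hx Hy.
  assert (inside : forall z, Rmin x y <= z <= Rmax x y -> a < z < b).
  { intros z. unfold Rmin, Rmax. destruct Rle_dec; lra. }
  destruct (MVT_gen f x y (fun _ => 0)) as [c [_ E]].
  - intros z Hz. apply df, inside. lra.
  - intros z Hz. exact (is_derive_continuity_pt _ _ _ (df z (inside z Hz))).
  - lra.
Qed.

Lemma continuous_neq0_pos (g : R -> R) c : (forall t, continuity_pt g t) ->
  (forall t, g t <> 0) -> 0 < g c -> forall t, 0 < g t.
Proof.
  intros gc g0 gpos t. destruct (Rlt_le_dec 0 (g t)) as [pos | le]; [exact pos |].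
  assert (neg : g t < 0) by (destruct le as [? | E]; [easy | now destruct (g0 t)]).
  destruct (Rtotal_order t c) as [lt | [-> | gt]]; [| lra |].
  - destruct (IVT g t c gc lt neg gpos) as [z [_ E]]. now destruct (g0 z).
  - destruct (IVT (fun x => - g x) c t (continuity_opp _ gc) gt ltac:(lra) ltac:(lra))
      as [z [_ E]].
    destruct (g0 z). lra.
Qed.

Lemma is_derive_RInt0 (f : R -> R) : (forall t, continuous f t) ->
  forall t, is_derive (fun t => RInt f 0 t) t (f t).
Proof.
  intros fc t. apply (is_derive_RInt f _ 0 t); [| apply fc].
  exists (mkposreal 1 Rlt_0_1). intros y _.
  apply (RInt_correct f). apply ex_RInt_continuous. intros; apply fc.
Qed.

Lemma ball_Rabs (x e y : R) : ball x e y <-> Rabs (y - x) < e.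
Proof. reflexivity. Qed.

Definition clamp (a b t : R) : R := Rmax a (Rmin b t).

Lemma continuous_on_Icc_extend a b (f : R -> R) : a <= b -> continuous_on_Icc a b f ->
  exists g : R -> R, (forall t, continuous g t) /\ forall t, in_Icc a b t -> g t = f t.
Proof.
  intros ab fc. exists (fun t => f (clamp a b t)).
  assert (clamp_in : forall t, in_Icc a b (clamp a b t)).
  { intros t. unfold clamp, in_Icc, Rmax, Rmin. repeat destruct Rle_dec; lra. }
  split.
  - intros t. apply (filterlim_comp _ _ _ _ f _ (within (in_Icc a b) (locally (clamp a b t)))).
    + intros P [eps HP]. exists eps. intros s Hs. apply HP; [| apply clamp_in].
      apply ball_Rabs. apply Rle_lt_trans with (Rabs (s - t)); [| exact Hs].
      unfold clamp, Rmax, Rmin. repeat destruct Rle_dec; unfold Rabs;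
        repeat destruct Rcase_abs; lra.
    + apply fc, clamp_in.
  - intros t Ht. unfold clamp, in_Icc, Rmax, Rmin in *. f_equal.
    repeat destruct Rle_dec; lra.
Qed.

Lemma is_derive_derive_on_Icc a b (f f' : R -> R) :
  (forall t, is_derive f t (f' t)) -> derive_on_Icc a b f f'.
Proof.
  intros df t _ P [eps HP].
  destruct (proj1 (is_derive_Reals f t (f' t)) (df t) eps (cond_pos eps)) as [d Hd].
  exists d. intros s Hs [_ st]. apply HP, ball_Rabs. apply (proj1 (ball_Rabs _ _ _)) in Hs.
  replace s with (t + (s - t)) at 1 by ring. apply Hd; [lra | exact Hs].
Qed.

Lemma continuous_continuous_on_Icc a b (f : R -> R) :
  (forall t, continuous f t) -> continuous_on_Icc a b f.
Proof.
  intros fc t _ P HP. destruct (fc t P HP) as [eps He].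
  exists eps. intros s Hs _. now apply He.
Qed.

Lemma derive_on_Icc_is_derive a b (f f' : R -> R) t :
  a < t < b -> derive_on_Icc a b f f' -> is_derive f t (f' t).
Proof.
  intros Ht df. apply is_derive_Reals. intros eps Heps.
  destruct (df t ltac:(unfold in_Icc; lra) _ (locally_ball (f' t) (mkposreal eps Heps)))
    as [d Hd].
  assert (Hm : 0 < Rmin d (Rmin (t - a) (b - t))).
  { apply Rmin_pos; [apply cond_pos | apply Rmin_pos; lra]. }
  exists (mkposreal _ Hm). intros k k0 Hk. simpl in Hk.
  assert (m1 := Rmin_l d (Rmin (t - a) (b - t))). assert (m2 := Rmin_r d (Rmin (t - a) (b - t))).
  assert (m3 := Rmin_l (t - a) (b - t)). assert (m4 := Rmin_r (t - a) (b - t)).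
  assert (Hk' := Rabs_def2 _ _ Hk).
  specialize (Hd (t + k)). replace (t + k - t) with k in Hd by ring. apply Hd.
  - apply ball_Rabs. replace (t + k - t) with k by ring. lra.
  - split; [unfold in_Icc |]; lra.
Qed.

Lemma derive_on_Icc_continuous a b (f f' : R -> R) :
  derive_on_Icc a b f f' -> continuous_on_Icc a b f.
Proof.
  intros df t Ht P [eps HP].
  destruct (df t Ht _ (locally_ball (f' t) (mkposreal 1 Rlt_0_1))) as [d Hd].
  set (K := Rabs (f' t) + 1).
  assert (HK : 0 < K) by (unfold K; pose proof (Rabs_pos (f' t)); lra).
  assert (Hm : 0 < Rmin d (eps / K)).
  { apply Rmin_pos; [apply cond_pos | apply Rdiv_lt_0_compat; [apply cond_pos | lra]]. }
  exists (mkposreal _ Hm). intros s Hs Hin. apply HP, ball_Rabs.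
  apply (proj1 (ball_Rabs _ _ _)) in Hs. simpl in Hs.
  assert (m1 := Rmin_l d (eps / K)). assert (m2 := Rmin_r d (eps / K)).
  destruct (Req_dec s t) as [-> | st].
  - rewrite Rminus_diag, Rabs_R0. apply cond_pos.
  - assert (Hq := Hd s ltac:(apply ball_Rabs; lra) (conj Hin st)).
    apply (proj1 (ball_Rabs _ _ _)) in Hq. simpl in Hq.
    assert (Hs0 : 0 < Rabs (s - t)) by (apply Rabs_pos_lt; lra).
    assert (quot : Rabs ((f s - f t) / (s - t)) <= K).
    { unfold K. replace ((f s - f t) / (s - t)) with
        ((f s - f t) / (s - t) - f' t + f' t) by ring.
      eapply Rle_trans; [apply Rabs_triang | lra]. }
    rewrite Rabs_div in quot by lra.
    apply Rle_div_l in quot; [| lra].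
    assert (close : Rabs (s - t) * K < eps / K * K) by (apply Rmult_lt_compat_r; lra).
    replace (eps / K * K) with (pos eps) in close by (field; lra). lra.
Qed.

Lemma continuous_on_Icc_eq a b (f g : R -> R) : a < b ->
  continuous_on_Icc a b f -> continuous_on_Icc a b g ->
  (forall t, a < t < b -> f t = g t) -> forall t, in_Icc a b t -> f t = g t.
Proof.
  intros ab fc gc fg t Ht. destruct (Req_dec (f t) (g t)) as [E | NE]; [exact E | exfalso].
  assert (He : 0 < Rabs (f t - g t) / 2) by (apply Rdiv_lt_0_compat; [apply Rabs_pos_lt |]; lra).
  set (e := mkposreal _ He).
  destruct (fc t Ht _ (locally_ball (f t) e)) as [d1 H1].
  destruct (gc t Ht _ (locally_ball (g t) e)) as [d2 H2].
  set (delta := Rmin (Rmin d1 d2) (b - a) / 4).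
  assert (m1 := Rmin_l (Rmin d1 d2) (b - a)). assert (m2 := Rmin_r (Rmin d1 d2) (b - a)).
  assert (m3 := Rmin_l d1 d2). assert (m4 := Rmin_r d1 d2).
  assert (delta_pos : 0 < delta).
  { unfold delta. apply Rdiv_lt_0_compat; [apply Rmin_pos; [apply Rmin_pos; apply cond_pos | lra] | lra]. }
  assert (near : exists s, a < s < b /\ Rabs (s - t) < Rmin d1 d2).
  { unfold in_Icc in Ht. destruct (Rlt_le_dec (t + delta) b).
    - exists (t + delta). rewrite Rabs_right by lra. unfold delta in *. lra.
    - exists (t - delta). rewrite Rabs_left by lra. unfold delta in *. lra. }
  destruct near as [s [Hs Hst]].
  assert (Fs := H1 s ltac:(apply ball_Rabs; lra) ltac:(unfold in_Icc; lra)).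
  assert (Gs := H2 s ltac:(apply ball_Rabs; lra) ltac:(unfold in_Icc; lra)).
  apply (proj1 (ball_Rabs _ _ _)) in Fs. apply (proj1 (ball_Rabs _ _ _)) in Gs.
  simpl in Fs, Gs. rewrite (fg s Hs) in Fs.
  assert (Rabs (f t - g t) <= Rabs (g s - f t) + Rabs (g s - g t)).
  { replace (f t - g t) with (- (g s - f t) + (g s - g t)) by ring.
    eapply Rle_trans; [apply Rabs_triang | rewrite Rabs_Ropp; lra]. }
  lra.
Qed.

Lemma is_derive2_pos_gt_right (F F' : R -> R) t0 l : (forall t, is_derive F t (F' t)) ->
  F' t0 = 0 -> is_derive F' t0 l -> 0 < l ->
  forall d, 0 < d -> exists t, t0 < t < t0 + d /\ F t0 < F t.
Proof.
  intros dF crit d2F l_pos d d_pos.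
  destruct (proj1 (is_derive_Reals F' t0 l) d2F l l_pos) as [delta Hdelta].
  set (k := Rmin d delta / 2).
  assert (k_pos : 0 < k) by (apply Rdiv_lt_0_compat; [apply Rmin_pos; [lra | apply cond_pos] | lra]).
  assert (m1 := Rmin_l d delta). assert (m2 := Rmin_r d delta).
  exists (t0 + k). split; [unfold k in *; lra |].
  destruct (MVT_is_derive F F' t0 (t0 + k) ltac:(lra) dF) as [c [Hc E]].
  assert (quot : 0 < F' c / (c - t0)).
  { assert (Hq := Hdelta (c - t0) ltac:(lra)
      ltac:(rewrite Rabs_right by lra; unfold k in *; lra)).
    replace (t0 + (c - t0)) with c in Hq by ring. rewrite crit, Rminus_0_r in Hq.
    apply Rabs_def2 in Hq. lra. }
  assert (F'_pos : 0 < F' c).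
  { replace (F' c) with (F' c / (c - t0) * (c - t0)) by (field; lra).
    apply Rmult_lt_0_compat; lra. }
  assert (0 < F' c * (t0 + k - t0)) by (apply Rmult_lt_0_compat; lra). lra.
Qed.

Section MaximumPrinciple.

Variables (a b : R) (c w w' w'' : R -> R).
Hypothesis ab : a <= b.
Hypothesis w_der : forall t, is_derive w t (w' t).
Hypothesis w'_der : forall t, is_derive w' t (w'' t).
Hypothesis w_pos : forall t, a <= t <= b -> 0 < w t.

(* If v > 0 somewhere, v/w has a positive maximum at an interior t0; then
   R := w t0 * v - v t0 * w is <= 0 = R t0 with R'(t0) = 0, while the
   differential inequalities force R''(t0) > 0. *)
Lemma maximum_principle (v v' v'' : R -> R) :
  (forall t, a <= t <= b -> 0 < - w'' t + c t * w t) ->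
  (forall t, is_derive v t (v' t)) -> (forall t, is_derive v' t (v'' t)) ->
  v a <= 0 -> v b <= 0 -> (forall t, a <= t <= b -> - v'' t + c t * v t <= 0) ->
  forall t, a <= t <= b -> v t <= 0.
Proof.
  intros w_super v_der v'_der va vb v_sub.
  set (z t := v t / w t).
  assert (z_cont : forall t, a <= t <= b -> continuity_pt z t).
  { intros t Ht. apply continuity_pt_div.
    - exact (is_derive_continuity_pt _ _ _ (v_der t)).
    - exact (is_derive_continuity_pt _ _ _ (w_der t)).
    - specialize (w_pos t Ht). lra. }
  destruct (continuity_ab_maj z a b ab z_cont) as [t0 [z_max Ht0]].
  assert (vz : forall t, a <= t <= b -> v t = z t * w t).
  { intros t Ht. unfold z. field. specialize (w_pos t Ht). lra. }
  destruct (Rle_lt_dec (z t0) 0) as [z_nonpos | z_pos].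
  { intros t Ht. rewrite (vz t Ht). specialize (z_max t Ht). specialize (w_pos t Ht). nra. }
  exfalso.
  assert (w0 := w_pos t0 Ht0).
  assert (v0 : 0 < v t0) by (rewrite (vz t0 Ht0); nra).
  assert (t0_in : a < t0 < b).
  { split; apply Rnot_le_lt; intros le.
    - assert (t0 = a) as -> by lra. lra.
    - assert (t0 = b) as -> by lra. lra. }
  set (Rf t := w t0 * v t - v t0 * w t).
  set (Rf' t := w t0 * v' t - v t0 * w' t).
  assert (Rf_der : forall t, is_derive Rf t (Rf' t)) by (intros t; unfold Rf, Rf'; derive_by_hyps; ring).
  assert (Rf'_der : is_derive Rf' t0 (w t0 * v'' t0 - v t0 * w'' t0)).
  { unfold Rf'. derive_by_hyps. ring. }
  assert (Rf_nonpos : forall t, a <= t <= b -> Rf t <= 0).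
  { intros t Ht. unfold Rf. rewrite (vz t Ht), (vz t0 Ht0).
    specialize (z_max t Ht). specialize (w_pos t Ht).
    replace (w t0 * (z t * w t) - z t0 * w t0 * w t) with ((z t - z t0) * (w t * w t0)) by ring.
    apply Rmult_le_0_r; nra. }
  assert (Rf0 : Rf t0 = 0) by (unfold Rf; ring).
  assert (Rf'0 : Rf' t0 = 0).
  { set (pr := exist (fun l => derivable_pt_lim Rf t0 l) (Rf' t0)
      (proj1 (is_derive_Reals _ _ _) (Rf_der t0))).
    apply (deriv_maximum Rf a b t0 pr (proj1 t0_in) (proj2 t0_in)).
    intros x Hx1 Hx2. rewrite Rf0. apply Rf_nonpos. lra. }
  assert (Rf''_pos : 0 < w t0 * v'' t0 - v t0 * w'' t0).
  { specialize (v_sub t0 Ht0). specialize (w_super t0 Ht0). nra. }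
  destruct (is_derive2_pos_gt_right Rf Rf' t0 _ Rf_der Rf'0 Rf'_der Rf''_pos (b - t0))
    as [t [Ht gt]]; [lra |].
  assert (Rf t <= 0) by (apply Rf_nonpos; lra). lra.
Qed.

Lemma supersolution_bound (h h' h'' : R -> R) delta M :
  0 < delta -> (forall t, a <= t <= b -> delta <= - w'' t + c t * w t) ->
  (forall t, is_derive h t (h' t)) -> (forall t, is_derive h' t (h'' t)) ->
  h a = 0 -> h b = 0 -> (forall t, a <= t <= b -> Rabs (- h'' t + c t * h t) <= M) ->
  forall t, a <= t <= b -> Rabs (h t) <= M / delta * w t.
Proof.
  intros delta_pos w_super h_der h'_der ha hb f_bound.
  assert (M_nonneg : 0 <= M).
  { apply Rle_trans with (2 := f_bound a ltac:(lra)). apply Rabs_pos. }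
  assert (K_delta : M / delta * delta = M) by (field; lra).
  assert (one_side : forall s, s = 1 \/ s = -1 ->
    forall t, a <= t <= b -> s * h t - M / delta * w t <= 0).
  { intros s s_val.
    assert (w_bnd : forall t, a <= t <= b -> M <= M / delta * (- w'' t + c t * w t)).
    { intros t Ht. rewrite <- K_delta at 1. apply Rmult_le_compat_l; [| now apply w_super].
      apply Rdiv_le_0_compat; lra. }
    apply (maximum_principle _ (fun t => s * h' t - M / delta * w' t)
      (fun t => s * h'' t - M / delta * w'' t)).
    - intros t Ht. specialize (w_super t Ht). lra.
    - intros t. derive_by_hyps. ring.
    - intros t. derive_by_hyps. ring.
    - rewrite ha. specialize (w_pos a ltac:(lra)). nra.
    - rewrite hb. specialize (w_pos b ltac:(lra)). nra.
    - intros t Ht. specialize (w_bnd t Ht).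
      destruct (proj1 (Rabs_le_between _ _) (f_bound t Ht)) as [lo hi].
      destruct s_val as [-> | ->]; nra. }
  intros t Ht. apply Rabs_le.
  assert (up := one_side 1 (or_introl eq_refl) t Ht).
  assert (down := one_side (-1) (or_intror eq_refl) t Ht). lra.
Qed.

End MaximumPrinciple.

Lemma exp_le_27 s : s <= 3 -> exp s <= 27.
Proof.
  intros s3. apply Rle_trans with (exp 3).
  - destruct (Rle_lt_or_eq_dec _ _ s3) as [lt | ->]; [left; now apply exp_increasing | lra].
  - replace 3 with (1 + 1 + 1) by ring. rewrite !exp_plus.
    pose proof exp_le_3. pose proof (exp_pos 1). nra.
Qed.

Lemma energy_rate_le x y z M : 0 <= M -> Rabs z <= Rabs x + M ->
  2 * x * y + 2 * y * z <= 3 * (x ^ 2 + y ^ 2 + M ^ 2).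
Proof.
  intros M0 zx.
  assert (yz : y * z <= Rabs y * (Rabs x + M)).
  { eapply Rle_trans; [apply Rle_abs |].
    rewrite Rabs_mult. apply Rmult_le_compat_l; [apply Rabs_pos | exact zx]. }
  assert (xy : x * y <= Rabs x * Rabs y) by (rewrite <- Rabs_mult; apply Rle_abs).
  rewrite <- (pow2_abs x), <- (pow2_abs y).
  pose proof (pow2_ge_0 (Rabs x - Rabs y)). pose proof (pow2_ge_0 (Rabs y - M)).
  nra.
Qed.

Section EnergyGrowth.

Variables (h h' h'' : R -> R) (M : R).
Hypothesis M_nonneg : 0 <= M.
Hypothesis h_der : forall t, is_derive h t (h' t).
Hypothesis h'_der : forall t, is_derive h' t (h'' t).

Let energy (t : R) : R := h t ^ 2 + h' t ^ 2 + M ^ 2.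

(* Gronwall: energy' <= 3 energy, and exp 3 <= 27. *)
Lemma energy_growth_right a : (forall t, a <= t <= a + 1 -> Rabs (h'' t) <= Rabs (h t) + M) ->
  forall t, a <= t <= a + 1 -> energy t <= 27 * energy a.
Proof.
  intros h''_bound t Ht.
  set (G s := energy s * exp (-3 * (s - a))).
  set (G' s := (2 * h s * h' s + 2 * h' s * h'' s - 3 * energy s) * exp (-3 * (s - a))).
  assert (G_der : forall s, is_derive G s (G' s)).
  { intros s. unfold G, G', energy. derive_by_hyps. ring. }
  assert (G_dec : G t <= G a).
  { destruct (Rle_lt_or_eq_dec _ _ (proj1 Ht)) as [lt | <-]; [| lra].
    destruct (MVT_is_derive G G' a t lt G_der) as [c [Hc E]].
    assert (G' c <= 0).
    { apply Rmult_le_0_r; [| left; apply exp_pos]. unfold energy.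
      pose proof (energy_rate_le (h c) (h' c) (h'' c) M M_nonneg (h''_bound c ltac:(lra))).
      lra. }
    assert (G' c * (t - a) <= 0) by (apply Rmult_le_0_r; lra). lra. }
  assert (Ga : G a = energy a) by (unfold G; rewrite Rminus_diag, Rmult_0_r, exp_0; ring).
  assert (energy_t : energy t = G t * exp (3 * (t - a))).
  { unfold G. rewrite Rmult_assoc, <- exp_plus.
    replace (-3 * (t - a) + 3 * (t - a)) with 0 by ring. rewrite exp_0. ring. }
  assert (G_nonneg : 0 <= G t).
  { apply Rmult_le_pos; [unfold energy; nra | left; apply exp_pos]. }
  rewrite energy_t, Rmult_comm. apply Rmult_le_compat; [left; apply exp_pos | exact G_nonneg | |].
  - apply exp_le_27. lra.
  - lra.
Qed.

End EnergyGrowth.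

Lemma energy_growth_left (h h' h'' : R -> R) M a : 0 <= M ->
  (forall t, is_derive h t (h' t)) -> (forall t, is_derive h' t (h'' t)) ->
  (forall t, a - 1 <= t <= a -> Rabs (h'' t) <= Rabs (h t) + M) ->
  forall t, a - 1 <= t <= a ->
  h t ^ 2 + h' t ^ 2 + M ^ 2 <= 27 * (h a ^ 2 + h' a ^ 2 + M ^ 2).
Proof.
  intros M0 h_der h'_der h''_bound t Ht.
  assert (reflected := energy_growth_right (fun s => h (- s)) (fun s => - h' (- s))
    (fun s => h'' (- s)) M M0 ltac:(intros s; derive_by_hyps; ring)
    ltac:(intros s; derive_by_hyps; ring) (- a)
    ltac:(intros s Hs; apply h''_bound; lra) (- t) ltac:(lra)).
  simpl in reflected. rewrite !Ropp_involutive in reflected. nra.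
Qed.

Lemma derive_bound_unit (h h' h'' : R -> R) x A B :
  (forall t, is_derive h t (h' t)) -> (forall t, is_derive h' t (h'' t)) ->
  (forall t, x <= t <= x + 1 -> Rabs (h t) <= A) ->
  (forall t, x <= t <= x + 1 -> Rabs (h'' t) <= B) ->
  Rabs (h' x) <= 2 * A + B /\ Rabs (h' (x + 1)) <= 2 * A + B.
Proof.
  intros h_der h'_der hA h''B.
  destruct (MVT_is_derive h h' x (x + 1) ltac:(lra) h_der) as [c [Hc E]].
  replace (x + 1 - x) with 1 in E by ring. rewrite Rmult_1_r in E.
  assert (h'c : Rabs (h' c) <= 2 * A).
  { rewrite <- E. eapply Rle_trans; [apply Rabs_triang |]. rewrite Rabs_Ropp.
    pose proof (hA x ltac:(lra)). pose proof (hA (x + 1) ltac:(lra)). lra. }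
  assert (left := MVT_Rabs_le h' h'' x c B ltac:(lra) h'_der ltac:(intros; apply h''B; lra)).
  assert (right := MVT_Rabs_le h' h'' c (x + 1) B ltac:(lra) h'_der ltac:(intros; apply h''B; lra)).
  assert (B0 : 0 <= B) by (eapply Rle_trans; [apply Rabs_pos | apply (h''B x); lra]).
  assert (tri : forall u v, Rabs u <= Rabs v + Rabs (u - v)).
  { intros u v. replace u with (v + (u - v)) at 1 by ring. apply Rabs_triang. }
  split.
  - pose proof (tri (h' x) (h' c)). rewrite <- Rabs_Ropp in left.
    replace (- (h' c - h' x)) with (h' x - h' c) in left by ring. nra.
  - pose proof (tri (h' (x + 1)) (h' c)). nra.
Qed.

Lemma derive_bound_interval (h h' h'' : R -> R) a b A B : 2 <= b - a ->
  (forall t, is_derive h t (h' t)) -> (forall t, is_derive h' t (h'' t)) ->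
  (forall t, a <= t <= b -> Rabs (h t) <= A) ->
  (forall t, a <= t <= b -> Rabs (h'' t) <= B) ->
  forall t, a <= t <= b -> Rabs (h' t) <= 2 * A + B.
Proof.
  intros ab h_der h'_der hA h''B t Ht.
  destruct (Rle_lt_dec (t + 1) b).
  - refine (proj1 (derive_bound_unit h h' h'' t A B h_der h'_der _ _));
      intros s Hs; first [apply hA | apply h''B]; lra.
  - replace t with (t - 1 + 1) by ring.
    refine (proj2 (derive_bound_unit h h' h'' (t - 1) A B h_der h'_der _ _));
      intros s Hs; first [apply hA | apply h''B]; lra.
Qed.

Lemma Rabs_add_le_of_sq x y K : 0 <= K -> 2 * (x ^ 2 + y ^ 2) <= K ^ 2 ->
  Rabs x + Rabs y <= K.
Proof.
  intros K0 sq. rewrite <- (pow2_abs x), <- (pow2_abs y) in sq.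
  pose proof (Rabs_pos x). pose proof (Rabs_pos y).
  pose proof (pow2_ge_0 (Rabs x - Rabs y)). nra.
Qed.

Section VariationOfParameters.

Variables (c u u' : R -> R).
Hypothesis u_der : forall t, is_derive u t (u' t).
Hypothesis u'_der : forall t, is_derive u' t (c t * u t).
Hypothesis u_neq0 : forall t, u t <> 0.

Let A t := RInt (fun s => / u s ^ 2) 0 t.

Let A_der t : is_derive A t (/ u t ^ 2).
Proof.
  apply (is_derive_RInt0 (fun s => / u s ^ 2)). intros s.
  apply (ex_derive_continuous (fun s => / u s ^ 2)). auto_derive.
  split; [now exists (u' s) | split; [| exact I]].
  rewrite Rmult_1_r. apply Rmult_integral_contrapositive. split; apply u_neq0.
Qed.

Definition second_solution t := u t * A t.
Definition second_solution' t := u' t * A t + / u t.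

Lemma second_solution_der t : is_derive second_solution t (second_solution' t).
Proof. unfold second_solution, second_solution'. derive_by_hyps. field. apply u_neq0. Qed.

Lemma second_solution'_der t : is_derive second_solution' t (c t * second_solution t).
Proof. unfold second_solution, second_solution'. derive_by_hyps. field. apply u_neq0. Qed.

Lemma wronskian_eq1 t : u t * second_solution' t - u' t * second_solution t = 1.
Proof. unfold second_solution, second_solution'. field. apply u_neq0. Qed.

Lemma second_solution_0 : second_solution 0 = 0.
Proof. unfold second_solution, A. rewrite RInt_point. apply Rmult_0_r. Qed.

Variable T : R.
Hypothesis T_pos : 0 < T.

Lemma second_solution_T_neq0 : second_solution T <> 0.
Proof.
  destruct (MVT_is_derive A (fun t => / u t ^ 2) 0 T T_pos A_der) as [s [_ E]].
  assert (A_pos : 0 < A T).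
  { replace (A T) with (A T - A 0) by (unfold A; rewrite RInt_point; apply Rminus_0_r).
    rewrite E. apply Rmult_lt_0_compat; [| lra].
    apply Rinv_0_lt_compat, pow2_gt_0, u_neq0. }
  unfold second_solution. apply Rmult_integral_contrapositive. split; [apply u_neq0 | lra].
Qed.

(* d is a combination of u and v = second_solution whose coefficients are the
   Wronskians of (d, u) and (d, v), constant because all three solve d'' = c d. *)
Lemma homogeneous_zero a b (d d' : R -> R) : a < 0 -> T < b ->
  (forall t, a < t < b -> is_derive d t (d' t)) ->
  (forall t, a < t < b -> is_derive d' t (c t * d t)) ->
  d 0 = 0 -> d T = 0 -> forall t, a < t < b -> d t = 0.
Proof.
  intros a0 Tb d_der d'_der d0 dT.
  set (v := second_solution). set (v' := second_solution').
  set (K1 t := d t * u' t - d' t * u t).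
  set (K2 t := d t * v' t - d' t * v t).
  assert (K_const : forall K : R -> R, (K = K1 \/ K = K2) -> forall t, a < t < b -> K t = K 0).
  { intros K HK t Ht. apply (is_derive0_constant a b); [| lra | lra].
    intros s Hs. specialize (d_der s Hs). specialize (d'_der s Hs).
    pose proof (second_solution_der s). pose proof (second_solution'_der s).
    destruct HK as [-> | ->]; unfold K1, K2, v, v'; derive_by_hyps; ring. }
  assert (d_comb : forall t, d t = K2 t * u t - K1 t * v t).
  { intros t. rewrite <- (Rmult_1_r (d t)), <- (wronskian_eq1 t).
    unfold K1, K2, v, v'. ring. }
  assert (K2_0 : forall t, a < t < b -> K2 t = 0).
  { intros t Ht. rewrite (K_const K2 (or_intror eq_refl) t Ht).
    unfold K2, v. rewrite d0, second_solution_0. ring. }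
  assert (K1_0 : forall t, a < t < b -> K1 t = 0).
  { assert (K1_T : K1 T = 0).
    { assert (E := d_comb T). rewrite dT, (K2_0 T ltac:(lra)) in E.
      apply (Rmult_eq_reg_r (v T)); [lra | exact second_solution_T_neq0]. }
    intros t Ht. rewrite (K_const K1 (or_introl eq_refl) t Ht).
    rewrite <- (K_const K1 (or_introl eq_refl) T ltac:(lra)). exact K1_T. }
  intros t Ht. rewrite d_comb, (K1_0 t Ht), (K2_0 t Ht). ring.
Qed.

Variable f : R -> R.
Hypothesis f_cont : forall t, continuous f t.

Let J1 t := RInt (fun s => u s * f s) 0 t.
Let J2 t := RInt (fun s => second_solution s * f s) 0 t.

Let J1_der t : is_derive J1 t (u t * f t).
Proof.
  apply (is_derive_RInt0 (fun s => u s * f s)). intros s.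
  apply (continuous_mult u f); [| apply f_cont].
  apply (ex_derive_continuous u). now exists (u' s).
Qed.

Let J2_der t : is_derive J2 t (second_solution t * f t).
Proof.
  apply (is_derive_RInt0 (fun s => second_solution s * f s)). intros s.
  apply (continuous_mult second_solution f); [| apply f_cont].
  apply (ex_derive_continuous second_solution). eexists. apply second_solution_der.
Qed.

Let beta := (second_solution T * J1 T - u T * J2 T) / second_solution T.

Definition green_solution t :=
  u t * J2 t - second_solution t * J1 t + beta * second_solution t.
Definition green_solution' t :=
  u' t * J2 t - second_solution' t * J1 t + beta * second_solution' t.

Lemma green_solution_der t : is_derive green_solution t (green_solution' t).
Proof.
  pose proof second_solution_der. unfold green_solution, green_solution'.
  derive_by_hyps. ring.
Qed.

Lemma green_solution'_der t : is_derive green_solution' t (c t * green_solution t - f t).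
Proof.
  pose proof second_solution'_der.
  rewrite <- (Rmult_1_l (f t)), <- (wronskian_eq1 t).
  unfold green_solution, green_solution'. derive_by_hyps. ring.
Qed.

Lemma green_solution_0 : green_solution 0 = 0.
Proof.
  assert (J1_0 : J1 0 = 0) by (unfold J1; rewrite RInt_point; reflexivity).
  assert (J2_0 : J2 0 = 0) by (unfold J2; rewrite RInt_point; reflexivity).
  unfold green_solution. rewrite J1_0, J2_0, second_solution_0. ring.
Qed.

Lemma green_solution_T : green_solution T = 0.
Proof.
  unfold green_solution, beta. field. exact second_solution_T_neq0.
Qed.

End VariationOfParameters.

Definition pend_weight (q : R) : R := 1 / 2 + 2 * cos (q / 2) - cos q / 2.
Definition pend_weight' (q : R) : R := - sin (q / 2) + sin q / 2.
Definition pend_weight'' (q : R) : R := - cos (q / 2) / 2 + cos q / 2.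

Lemma half_angle_cos_bounds q : -PI <= q <= PI -> 0 <= cos (q / 2) <= 1.
Proof. intros Hq. split; [apply cos_ge_0; lra | apply COS_bound]. Qed.

Lemma cos_half_angle q : cos q = 2 * cos (q / 2) ^ 2 - 1.
Proof. replace q with (2 * (q / 2)) at 1 by field. rewrite cos_2a_cos. ring. Qed.

Lemma sin_half_angle q : sin q = 2 * sin (q / 2) * cos (q / 2).
Proof. replace q with (2 * (q / 2)) at 1 by field. apply sin_2a. Qed.

Lemma pend_weight_bounds q : -PI <= q <= PI -> 1 <= pend_weight q <= 2.
Proof.
  intros Hq. unfold pend_weight. rewrite (cos_half_angle q).
  pose proof (half_angle_cos_bounds q Hq). split; nra.
Qed.

Lemma separatrix_poly_ge C : 0 <= C <= 1 -> 1 / 4 <= 1 + 2 * C - 5 * C ^ 2 + 4 * C ^ 4.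
Proof.
  intros HC. destruct (Rle_lt_dec C (1 / 2)).
  - nra.
  - assert (1 + 2 * C - 5 * C ^ 2 + 4 * C ^ 4 = (2 * C ^ 2 - 1) ^ 2 - (C - 1) ^ 2 + 1) by ring.
    nra.
Qed.

(* With C = cos (q / 2) the left-hand side equals
   E (1 - C) (1 + 2 C) + (1 + 2 C - 5 C^2 + 4 C^4), where E = pend_energy q p. *)
Lemma pend_weight_super q p : -PI <= q <= PI -> 0 <= pend_energy q p ->
  1 / 4 <= - (pend_weight'' q * p ^ 2 + pend_weight' q * sin q) + cos q * pend_weight q.
Proof.
  intros Hq HE. set (E := pend_energy q p) in HE.
  set (C := cos (q / 2)). set (S := sin (q / 2)).
  assert (cos_q : cos q = 2 * C ^ 2 - 1) by apply cos_half_angle.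
  assert (sin_q : sin q = 2 * S * C) by apply sin_half_angle.
  assert (p2 : p ^ 2 = 2 * E + 2 - 2 * cos q) by (unfold E, pend_energy; field).
  assert (SC : S ^ 2 + C ^ 2 = 1) by (unfold S, C; rewrite <- !Rsqr_pow2; apply sin2_cos2).
  assert (C_bounds := half_angle_cos_bounds q Hq). fold C in C_bounds.
  assert (identity : - (pend_weight'' q * p ^ 2 + pend_weight' q * sin q) + cos q * pend_weight q
    = E * ((1 - C) * (1 + 2 * C)) + (1 + 2 * C - 5 * C ^ 2 + 4 * C ^ 4)
      + 2 * C * (1 - C) * (S ^ 2 + C ^ 2 - 1)).
  { unfold pend_weight, pend_weight', pend_weight''. fold C S.
    rewrite p2, sin_q, cos_q. field. }
  rewrite identity, SC, Rminus_diag, Rmult_0_r, Rplus_0_r.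
  pose proof (separatrix_poly_ge C C_bounds).
  assert (0 <= E * ((1 - C) * (1 + 2 * C))) by (apply Rmult_le_pos; nra).
  lra.
Qed.

Lemma pend_energy_conserved (Q Q' : R -> R) :
  (forall t, is_derive Q t (Q' t)) -> (forall t, is_derive Q' t (sin (Q t))) ->
  forall s t, pend_energy (Q s) (Q' s) = pend_energy (Q t) (Q' t).
Proof.
  intros Q_der Q'_der s t. unfold pend_energy.
  apply (is_derive0_constant (Rmin s t - 1) (Rmax s t + 1) (fun t => Q' t ^ 2 / 2 + cos (Q t) - 1));
    [| unfold Rmin, Rmax; destruct Rle_dec; lra ..].
  intros r _. derive_by_hyps. field.
Qed.

Section Pendulum.

Variables (T : R) (Q Q' : R -> R).
Hypothesis T_pos : 0 < T.
Hypothesis Q_orbit : is_Q_T T Q Q'.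

Let Q_der : forall t, is_derive Q t (Q' t) := proj1 Q_orbit.
Let Q'_der : forall t, is_derive Q' t (sin (Q t)) := proj1 (proj2 Q_orbit).
Let sinQ_der t : is_derive (fun t => sin (Q t)) t (cos (Q t) * Q' t).
Proof. derive_by_hyps. ring. Qed.

Lemma pendulum_energy_pos t : 0 < pend_energy (Q t) (Q' t).
Proof.
  rewrite (pend_energy_conserved Q Q' Q_der Q'_der t 0). apply Q_orbit.
Qed.

Lemma pendulum_velocity_neq0 t : Q' t <> 0.
Proof.
  intros Z. pose proof (pendulum_energy_pos t) as E. unfold pend_energy in E.
  rewrite Z in E. pose proof (COS_bound (Q t)). lra.
Qed.

(* Q' does not vanish, and Q climbs by 2 PI on [0, T]. *)
Lemma pendulum_velocity_pos t : 0 < Q' t.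
Proof.
  pose proof Q_orbit as [_ [_ [_ [_ [Q0 QT]]]]].
  destruct (MVT_is_derive Q Q' 0 T T_pos Q_der) as [c [_ E]].
  rewrite Q0, QT in E. pose proof PI_RGT_0.
  apply (continuous_neq0_pos Q' c); [| exact pendulum_velocity_neq0 | nra].
  intros s. exact (is_derive_continuity_pt _ _ _ (Q'_der s)).
Qed.

Lemma pendulum_range t : 0 <= t <= T -> -PI <= Q t <= PI.
Proof.
  intros Ht. pose proof Q_orbit as [_ [_ [_ [_ [Q0 QT]]]]].
  assert (mono : forall x y, x <= y -> Q x <= Q y).
  { intros x y le. destruct (Rle_lt_or_eq_dec _ _ le) as [lt | <-]; [| lra].
    destruct (MVT_is_derive Q Q' x y lt Q_der) as [c [_ E]].
    pose proof (pendulum_velocity_pos c). nra. }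
  rewrite <- Q0, <- QT. split; apply mono; lra.
Qed.

Let w t := pend_weight (Q t).
Let w' t := pend_weight' (Q t) * Q' t.
Let w'' t := pend_weight'' (Q t) * Q' t ^ 2 + pend_weight' (Q t) * sin (Q t).

Lemma pendulum_weight_der t : is_derive w t (w' t).
Proof. unfold w, w', pend_weight, pend_weight'. derive_by_hyps. field. Qed.

Lemma pendulum_weight'_der t : is_derive w' t (w'' t).
Proof. unfold w', w'', pend_weight', pend_weight''. derive_by_hyps. field. Qed.

Lemma pendulum_dirichlet_bound (h h' h'' : R -> R) M :
  (forall t, is_derive h t (h' t)) -> (forall t, is_derive h' t (h'' t)) ->
  h 0 = 0 -> h T = 0 -> (forall t, 0 <= t <= T -> Rabs (- h'' t + cos (Q t) * h t) <= M) ->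
  forall t, 0 <= t <= T -> Rabs (h t) <= 8 * M.
Proof.
  intros h_der h'_der h0 hT f_bound t Ht.
  assert (M0 : 0 <= M) by (apply Rle_trans with (2 := f_bound 0 ltac:(lra)); apply Rabs_pos).
  assert (w_le_2 := pend_weight_bounds _ (pendulum_range t Ht)).
  apply Rle_trans with (M / (1 / 4) * w t).
  - apply (supersolution_bound 0 T (fun t => cos (Q t)) w w' w'' ltac:(lra)
      pendulum_weight_der pendulum_weight'_der) with (h' := h') (h'' := h''); auto; [| lra |].
    + intros s Hs. unfold w. pose proof (pend_weight_bounds _ (pendulum_range s Hs)). lra.
    + intros s Hs. apply pend_weight_super; [now apply pendulum_range |].
      left. apply pendulum_energy_pos.
  - unfold w. replace (M / (1 / 4)) with (4 * M) by field. nra.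
Qed.

Lemma pendulum_green_bound (h h' h'' f : R -> R) M : 2 <= T ->
  (forall t, is_derive h t (h' t)) -> (forall t, is_derive h' t (h'' t)) ->
  (forall t, in_Icc (-1) (T + 1) t -> - h'' t + cos (Q t) * h t = f t) ->
  h 0 = 0 -> h T = 0 ->
  (forall t, in_Icc (-1) (T + 1) t -> Rabs (f t) <= M) ->
  forall t, in_Icc (-1) (T + 1) t -> Rabs (h t) + Rabs (h' t) <= 200 * M.
Proof.
  intros T2 h_der h'_der h_eq h0 hT f_bound. unfold in_Icc in *.
  assert (M0 : 0 <= M) by (apply Rle_trans with (2 := f_bound 0 ltac:(lra)); apply Rabs_pos).
  assert (h''_bound : forall t, -1 <= t <= T + 1 -> Rabs (h'' t) <= Rabs (h t) + M).
  { intros t Ht. replace (h'' t) with (cos (Q t) * h t - f t) by (rewrite <- h_eq; [ring | lra]).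
    eapply Rle_trans; [apply Rabs_triang |]. rewrite Rabs_Ropp, Rabs_mult.
    pose proof (f_bound t Ht). pose proof (Rabs_pos (h t)).
    assert (Rabs (cos (Q t)) <= 1) by (apply Rabs_le, COS_bound). nra. }
  assert (h_bound : forall t, 0 <= t <= T -> Rabs (h t) <= 8 * M).
  { apply (pendulum_dirichlet_bound h h' h''); auto.
    intros t Ht. rewrite h_eq; [apply f_bound |]; lra. }
  assert (h'_bound : forall t, 0 <= t <= T -> Rabs (h' t) <= 25 * M).
  { replace (25 * M) with (2 * (8 * M) + 9 * M) by ring.
    apply (derive_bound_interval h h' h''); auto; [lra |].
    intros t Ht. pose proof (h''_bound t ltac:(lra)). pose proof (h_bound t Ht). lra. }
  assert (from_energy : forall a t, 0 <= a <= T -> h a = 0 ->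
    h t ^ 2 + h' t ^ 2 + M ^ 2 <= 27 * (h a ^ 2 + h' a ^ 2 + M ^ 2) ->
    Rabs (h t) + Rabs (h' t) <= 200 * M).
  { intros a t Ha ha E. apply Rabs_add_le_of_sq; [lra |].
    rewrite ha in E. rewrite <- (pow2_abs (h' a)) in E.
    pose proof (h'_bound a Ha). pose proof (Rabs_pos (h' a)). nra. }
  intros t Ht. destruct (Rle_lt_dec 0 t); [destruct (Rle_lt_dec t T) |].
  - pose proof (h_bound t ltac:(lra)). pose proof (h'_bound t ltac:(lra)). lra.
  - apply (from_energy T); [lra | exact hT |].
    apply (energy_growth_right h h' h'' M M0 h_der h'_der T); [intros s Hs; apply h''_bound |]; lra.
  - apply (from_energy 0); [lra | exact h0 |].
    apply (energy_growth_left h h' h'' M 0 M0 h_der h'_der); [intros s Hs; apply h''_bound |]; lra.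
Qed.

Let Q'_neq0 : forall t, Q' t <> 0 := pendulum_velocity_neq0.

Lemma pendulum_green_sol_exists (f : R -> R) : continuous_on_Icc (-1) (T + 1) f ->
  exists h h' h'' : R -> R, (forall t, is_derive h t (h' t)) /\
    (forall t, is_derive h' t (h'' t)) /\ green_sol T Q f h h' h''.
Proof.
  intros f_cont.
  destruct (continuous_on_Icc_extend (-1) (T + 1) f ltac:(lra) f_cont) as [g [g_cont g_f]].
  set (h := green_solution Q' T g).
  assert (h_der := green_solution_der Q' _ Q'_der Q'_neq0 T g g_cont).
  assert (h'_der := green_solution'_der (fun t => cos (Q t)) Q' _ Q'_der sinQ_der Q'_neq0 T g g_cont).
  exists h, (green_solution' Q' (fun t => sin (Q t)) T g), (fun t => cos (Q t) * h t - g t).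
  split; [exact h_der | split; [exact h'_der |]].
  repeat split.
  - now apply is_derive_derive_on_Icc.
  - now apply is_derive_derive_on_Icc.
  - apply continuous_continuous_on_Icc. intros t.
    apply (continuous_minus (fun t => cos (Q t) * h t)); [| apply g_cont].
    apply (ex_derive_continuous (fun t => cos (Q t) * h t)). auto_derive.
    split; [now exists (Q' t) | split; [now exists (green_solution' Q' (fun t => sin (Q t)) T g t) | exact I]].
  - intros t Ht. rewrite <- (g_f t Ht). ring.
  - apply green_solution_0.
  - now apply (green_solution_T Q' (fun t => sin (Q t))).
Qed.

Lemma pendulum_green_sol_unique (f g g' g'' h h' h'' : R -> R) :
  green_sol T Q f g g' g'' -> green_sol T Q f h h' h'' ->
  forall t, in_Icc (-1) (T + 1) t -> g t = h t.
Proof.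
  intros [g_der [g'_der [_ [g_eq [g0 gT]]]]] [h_der [h'_der [_ [h_eq [h0 hT]]]]].
  apply (continuous_on_Icc_eq (-1) (T + 1)); [lra | exact (derive_on_Icc_continuous _ _ _ _ g_der)
    | exact (derive_on_Icc_continuous _ _ _ _ h_der) |].
  intros t Ht. apply Rminus_diag_uniq.
  refine (homogeneous_zero (fun t => cos (Q t)) Q' _ Q'_der sinQ_der Q'_neq0 T T_pos (-1) (T + 1)
    (fun t => g t - h t) (fun t => g' t - h' t) ltac:(lra) ltac:(lra) _ _ _ _ t Ht).
  - intros s Hs. apply (derive_on_Icc_is_derive _ _ _ _ s Hs) in g_der, h_der.
    derive_by_hyps. ring.
  - intros s Hs. apply (derive_on_Icc_is_derive _ _ _ _ s Hs) in g'_der, h'_der.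
    assert (in_s : in_Icc (-1) (T + 1) s) by (unfold in_Icc; lra).
    specialize (g_eq s in_s). specialize (h_eq s in_s).
    derive_by_hyps. lra.
  - rewrite g0, h0. ring.
  - rewrite gT, hT. ring.
Qed.

End Pendulum.

Theorem lemma8p1 :
  exists T0 : R, 0 < T0 /\
  exists C : R, 0 < C /\
  forall (T : R) (Q Q' : R -> R),
    T0 <= T -> is_Q_T T Q Q' ->
    forall f : R -> R, continuous_on_Icc (-1) (T + 1) f ->
      exists h h' h'' : R -> R,
        green_sol T Q f h h' h'' /\
        (forall g g' g'' : R -> R, green_sol T Q f g g' g'' ->
           forall t, in_Icc (-1) (T + 1) t -> g t = h t) /\
        (forall M : R, (forall t, in_Icc (-1) (T + 1) t -> Rabs (f t) <= M) ->
           forall t, in_Icc (-1) (T + 1) t -> Rabs (h t) + Rabs (h' t) <= C * M).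
Proof.
  exists 2. split; [lra |]. exists 200. split; [lra |].
  intros T Q Q' T2 Q_orbit f f_cont.
  destruct (pendulum_green_sol_exists T Q Q' ltac:(lra) Q_orbit f f_cont)
    as [h [h' [h'' [h_der [h'_der h_sol]]]]].
  exists h, h', h''. split; [exact h_sol | split].
  - intros g g' g'' g_sol. exact (pendulum_green_sol_unique T Q Q' ltac:(lra) Q_orbit f _ _ _ _ _ _ g_sol h_sol).
  - intros M. destruct h_sol as [_ [_ [_ [h_eq [h0 hT]]]]].
    exact (pendulum_green_bound T Q Q' ltac:(lra) Q_orbit h h' h'' f M T2 h_der h'_der h_eq h0 hT).
Qed.
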